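(* Let $I,J\subseteq\mathbb{R}$ be intervals, $\tilde J\subseteq\mathbb{R}$, let $t:I\times J\to\tilde J$ and $h:I\times J\to(0,\infty)$ be such that $(g\circ t)\cdot h$ is competitorblind for every bounded continuous $g:\mathbb{R}\to\mathbb{R}$. Then $t$ is not injective.
   Context: Two finite measures $\alpha,\beta$ on $\mathbb{R}^2$ are competitors if they have the same first marginal $\alpha_0$ and the same second marginal, and for disintegrations $(\alpha_x),(\beta_x)$ with respect to $\alpha_0$ one has $\int y\,\alpha_x(dy)=\int y\,\beta_x(dy)$ for $\alpha_0$-a.e. $x$. A function $f$ on a rectangle $A\times B$ is called competitorblind if $\int f\,d\alpha=\int f\,d\beta$ whenever $\alpha,\beta$ are competitors concentrated on $A\times B$. *)

From HB Require Import structures.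
From mathcomp Require Import all_boot all_order all_algebra.
From mathcomp Require Import all_classical all_reals all_analysis.
From mathcomp Require Import measurable_realfun.
Set Implicit Arguments. Unset Strict Implicit. Unset Printing Implicit Defensive.
Import Order.TTheory GRing.Theory Num.Theory.
Import numFieldNormedType.Exports.
Local Open Scope classical_set_scope.
Local Open Scope ring_scope.

Section Competitors.
Variable R : realType.
Local Notation T := ((R : measurableType _) * (R : measurableType _))%type.

Definition marg1 (a : set T -> \bar R) : set R -> \bar R :=
  fun A => a (fst @^-1` A).
Definition marg2 (a : set T -> \bar R) : set R -> \bar R :=
  fun B => a (snd @^-1` B).

(* k = (k_x)_x is a disintegration of alpha with respect to its first
   marginal alpha_0:  k is a measurable family of measures and
   alpha (A x B) = \int_A k_x(B) alpha_0(dx) for measurable A, B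
   (the integral against alpha_0 = fst_# alpha written as an integral
   against alpha of x = z.1, i.e. by definition of the image measure). *)
Definition disintegration (a : {measure set T -> \bar R})
  (k : R -> {measure set R -> \bar R}) : Prop :=
  (forall B : set R, measurable B -> measurable_fun [set: R] (fun x : R => (k x B : \bar R))) /\
  (forall A B : set R, measurable A -> measurable B ->
     a (A `*` B) = (\int[a]_(z in fst @^-1` A) k z.1 B)%E).

Definition competitors (a b : {finite_measure set T -> \bar R}) : Prop :=
  (forall A : set R, measurable A -> marg1 a A = marg1 b A) /\
  (forall B : set R, measurable B -> marg2 a B = marg2 b B) /\
  exists ka kb : R -> {measure set R -> \bar R},
    disintegration a ka /\ disintegration b kb /\
    (* for alpha_0-a.e. x the barycenters exist and coincide *)
    exists N : set R, measurable N /\ marg1 a N = 0%E /\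
      forall x, ~ N x ->
        (ka x).-integrable [set: R] (fun y => y%:E) /\
        (kb x).-integrable [set: R] (fun y => y%:E) /\
        (\int[ka x]_y y%:E = \int[kb x]_y y%:E)%E.

Definition concentrated_on (a : set T -> \bar R) (A B : set R) : Prop :=
  a (~` (A `*` B)) = 0%E.

Definition competitorblind (A B : set R) (f : T -> R) : Prop :=
  measurable_fun (A `*` B) f /\
  forall a b : {finite_measure set T -> \bar R},
    competitors a b -> concentrated_on a A B -> concentrated_on b A B ->
    a.-integrable (A `*` B) (fun z => (f z)%:E) ->
    b.-integrable (A `*` B) (fun z => (f z)%:E) ->
    (\int[a]_(z in A `*` B) (f z)%:E = \int[b]_(z in A `*` B) (f z)%:E)%E.

End Competitors.

From HB Require Import structures.
From mathcomp Require Import all_boot all_order all_algebra.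
From mathcomp Require Import all_classical all_reals all_analysis.
From mathcomp Require Import measurable_realfun.
From mathcomp Require Import lra.
Import Order.TTheory GRing.Theory Num.Theory.
Import numFieldNormedType.Exports.
Set Implicit Arguments. Unset Strict Implicit. Unset Printing Implicit Defensive.
Local Open Scope classical_set_scope.
Local Open Scope ring_scope.

(* Two finitely supported measures are competitors as soon as their marginals
   agree and, above every x, the uniform measures on their fibres have the same
   barycentre. Pick a <> b in I, c < e in J and m = (c + e) / 2: then
   alpha = 2 \d_(a,m) + \d_(b,c) + \d_(b,e) and
   beta = \d_(a,c) + \d_(a,e) + 2 \d_(b,m) are competitors, so every
   competitorblind f satisfies
   2 f(a,m) + f(b,c) + f(b,e) = f(a,c) + f(a,e) + 2 f(b,m).
   If t were injective, t(a,m) would differ from the five other values of t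
   occurring here, and a tent function g centred at t(a,m) vanishing at those
   values would make the left side positive and the right side zero. *)

Lemma natr_count (F : nzSemiRingType) (T : Type) (a : pred T) (s : seq T) :
  (count a s)%:R = \sum_(x <- s) (a x)%:R :> F.
Proof. by elim: s => [|x s IHs]; rewrite ?big_nil ?big_cons //= natrD IHs. Qed.

Lemma in_preimage (aT rT : Type) (f : aT -> rT) (A : set rT) (x : aT) :
  (x \in f @^-1` A) = (f x \in A).
Proof. by apply/idP/idP => /set_mem; exact: mem_set. Qed.

Section atoms.
Context d (T : measurableType d) (R : realType).
Implicit Types (s : seq T) (A D : set T).

Definition atoms s : set T -> \bar R :=
  msum (fun k => \d_(nth point s k)) (size s).

HB.instance Definition _ s := Measure.on (atoms s).

Lemma atomsE s A : atoms s A = (count (mem A) s)%:R%:E.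
Proof.
rewrite /atoms /msum -(big_mkord xpredT (fun k => \d_(nth point s k) A)).
rewrite -(big_nth point xpredT (fun p => \d_p A)) natr_count -sumEFin.
by apply: eq_bigr => p _; rewrite diracE.
Qed.

Lemma atoms_fin_num s : fin_num_fun (atoms s).
Proof. by move=> A _; rewrite atomsE. Qed.

HB.instance Definition _ s :=
  @Measure_isFinite.Build _ T R (atoms s) (atoms_fin_num s).

Lemma atoms_eq0 s A : {in s, forall p, ~ A p} -> atoms s A = 0%E.
Proof.
move=> sA; rewrite atomsE (eq_in_count (a2 := pred0)) ?count_pred0 //.
by move=> p ps; exact/memNset/sA.
Qed.

Lemma ge0_integral_atoms s D (f : T -> \bar R) : measurable D ->
  measurable_fun D f -> (forall x, D x -> 0 <= f x)%E ->
  (\int[atoms s]_(x in D) f x = \sum_(p <- s | p \in D) f p)%E.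
Proof.
move=> mD mf f0; rewrite ge0_integral_measure_sum //.
rewrite -(big_mkord xpredT (fun k => \int[\d_(nth point s k)]_(x in D) f x)%E).
rewrite -(big_nth point xpredT (fun p => \int[\d_p]_(x in D) f x)%E) [RHS]big_mkcond.
apply: eq_bigr => p _; rewrite integral_dirac // diracE.
by case: (p \in D); rewrite ?mul1e ?mul0e.
Qed.

Lemma integral_atoms s D (f : T -> R) : measurable D -> measurable_fun D f ->
  (\int[atoms s]_(x in D) (f x)%:E = (\sum_(p <- s | p \in D) f p)%:E)%E.
Proof.
move=> mD mf; have mF : measurable_fun D (EFin \o f) by exact/measurable_EFinP.
rewrite integralE !ge0_integral_atoms //; last 2 first.
- exact: measurable_funeneg.
- exact: measurable_funepos.
have Fpos p : ((EFin \o f)^\+ p = (Num.max (f p) 0)%:E)%E.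
  by rewrite funeposE; exact: (esym (EFin_max _ 0)).
have Fneg p : ((EFin \o f)^\- p = (Num.max (- f p) 0)%:E)%E.
  by rewrite funenegE; exact: (esym (EFin_max _ 0)).
rewrite (eq_bigr _ (fun p _ => Fpos p)) (eq_bigr _ (fun p _ => Fneg p)) !sumEFin.
rewrite -EFinB -sumrB; congr EFin; apply: eq_bigr => p _.
by rewrite !maxr_absE !subr0 !addr0 normrN; lra.
Qed.

Lemma integrable_atoms s D (f : T -> R) : measurable D -> measurable_fun D f ->
  (atoms s).-integrable D (EFin \o f).
Proof.
move=> mD mf; apply/integrableP; split; first exact/measurable_EFinP.
rewrite ge0_integral_atoms //; last first.
  by apply: measurableT_comp => //; exact/measurable_EFinP.
by rewrite (eq_bigr (fun p => `|f p|%:E)) // sumEFin ltry.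
Qed.

Definition empirical s : set T -> \bar R :=
  mscale ((size s)%:R^-1)%:nng (atoms s).

HB.instance Definition _ s := Measure.on (empirical s).

Lemma empiricalE s A :
  empirical s A = ((size s)%:R^-1 * (count (mem A) s)%:R)%:E.
Proof. by rewrite /empirical /mscale /= atomsE. Qed.

Lemma integral_empirical s D (f : T -> R) : measurable D -> measurable_fun D f ->
  (\int[empirical s]_(x in D) (f x)%:E =
   ((size s)%:R^-1 * \sum_(p <- s | p \in D) f p)%:E)%E.
Proof.
move=> mD mf; have mF : measurable_fun D (EFin \o f) by exact/measurable_EFinP.
rewrite integralE !ge0_integral_mscale //; last 2 first.
- exact: measurable_funeneg.
- exact: measurable_funepos.
rewrite -muleBr // -?integralE ?integral_atoms -?EFinM //.
by rewrite fin_num_adde_defl // fin_numN integrable_neg_fin_num // integrable_atoms.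
Qed.

Lemma integrable_empirical s D (f : T -> R) : measurable D -> measurable_fun D f ->
  (empirical s).-integrable D (EFin \o f).
Proof.
move=> mD mf; apply/integrableP; split; first exact/measurable_EFinP.
have /integrableP[_ atoms_fin] := @integrable_atoms s D f mD mf.
rewrite ge0_integral_mscale //; last by apply: measurableT_comp => //; exact/measurable_EFinP.
by rewrite lte_mul_pinfty.
Qed.

End atoms.
Arguments atoms {d T R}.
Arguments empirical {d T R}.

Definition mean (R : numFieldType) (t : seq R) := (size t)%:R^-1 * \sum_(y <- t) y.

Lemma integral_empirical_id (R : realType) (t : seq R) :
  (\int[empirical t]_y y%:E = (mean t)%:E)%E.
Proof.
rewrite (@integral_empirical _ _ _ t setT idfun) //; last exact: measurable_id.
by rewrite /mean; under eq_bigl do rewrite in_setT.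
Qed.

Lemma integrable_empirical_id (R : realType) (t : seq R) :
  (empirical t).-integrable setT (fun y => y%:E).
Proof. exact: (integrable_empirical t measurableT (@measurable_id _ _ setT)). Qed.

Section fibres.
Context (R : realType).
Local Notation T := ((R : measurableType _) * (R : measurableType _))%type.
Implicit Types (s : seq (R * R)) (x : R).

Definition fibre s x := [seq p.2 | p <- s & p.1 == x].

Definition fibre_kernel s x : {measure set R -> \bar R} := empirical (fibre s x).

Lemma fibre_kernelE s x B : fibre_kernel s x B =
  ((size (fibre s x))%:R^-1 * (count (mem B) (fibre s x))%:R)%:E.
Proof. exact: empiricalE. Qed.

Lemma count_fibre s x (Q : pred R) :
  count Q (fibre s x) = count (fun p => (p.1 == x) && Q p.2) s.
Proof. by rewrite count_map count_filter; apply: eq_count => p; rewrite /= andbC. Qed.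

Lemma size_fibre s x : size (fibre s x) = count (fun p => p.1 == x) s.
Proof. by rewrite size_map size_filter. Qed.

Lemma sum_fibre_frequency s (P Q : pred R) :
  \sum_(p <- s | P p.1) (size (fibre s p.1))%:R^-1 * (count Q (fibre s p.1))%:R
  = (count (fun p => P p.1 && Q p.2) s)%:R :> R.
Proof.
have fibre_mass q : q \in s ->
    \sum_(p <- s | P p.1) (size (fibre s p.1))%:R^-1 * ((q.1 == p.1) && Q q.2)%:R
    = (P q.1 && Q q.2)%:R :> R.
  move=> sq; set n := size (fibre s q.1).
  have n_gt0 : (0 < n)%N by rewrite /n size_fibre -has_count; apply/hasP; exists q.
  rewrite (eq_bigr (fun p => n%:R^-1 * ((p.1 == q.1) && Q q.2)%:R)); last first.
    by move=> p _; have [->|_] := eqVneq p.1 q.1; rewrite ?eqxx //= !mulr0.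
  rewrite -big_distrr /= -big_filter -natr_count count_filter.
  have -> : count (predI (fun p => (p.1 == q.1) && Q q.2) (fun p => P p.1)) s
      = ((P q.1 && Q q.2) * n)%N.
    rewrite /n size_fibre; case: (boolP (P q.1 && Q q.2)) => [/andP[Pq Qq]|PQ].
      by rewrite mul1n; apply: eq_count => p /=; case: eqP => [->|]; rewrite ?Pq ?Qq.
    rewrite mul0n; apply/eqP; rewrite -leqn0 leqNgt -has_count; apply/hasPn => p _ /=.
    by apply: contra PQ => /andP[/andP[/eqP <- ->] ->].
  by rewrite natrM mulrCA mulVf ?mulr1 // pnatr_eq0 -lt0n.
transitivity (\sum_(p <- s | P p.1) \sum_(q <- s)
    (size (fibre s p.1))%:R^-1 * ((q.1 == p.1) && Q q.2)%:R : R).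
  by apply: eq_bigr => p _; rewrite count_fibre natr_count mulr_sumr.
rewrite exchange_big natr_count big_seq [RHS]big_seq.
by apply: eq_bigr => q; exact: fibre_mass.
Qed.

Lemma measurable_fibre_kernel s B :
  measurable_fun setT (fun x => fibre_kernel s x B).
Proof.
have kernelE x : fibre_kernel s x B = (\sum_(p <- s)
    \1_[set p.1] x * ((size (fibre s p.1))%:R^-1 * (p.2 \in B)%:R))%:E.
  rewrite fibre_kernelE count_fibre natr_count mulr_sumr.
  congr EFin; apply: eq_big => // p _; rewrite indicE in_set1 eq_sym.
  by have [<-|] := eqVneq p.1 x; rewrite ?eqxx /= ?mul1r ?mulr0 ?mul0r.
rewrite (funext kernelE); apply/measurable_EFinP/measurable_sum => p.
by apply: measurable_funM => //; exact: measurable_indic.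
Qed.

Lemma fibre_kernel_disintegration s : disintegration (atoms s) (fibre_kernel s).
Proof.
split=> [B _|A B mA mB]; first exact: measurable_fibre_kernel.
have mfstA : measurable (fst @^-1` A : set T).
  by rewrite -[_ @^-1` _]setTI; exact: measurable_fst.
rewrite ge0_integral_atoms //; last first.
  apply: measurable_funTS; apply: measurableT_comp (measurable_fibre_kernel s B) _.
  exact: measurable_fst.
under eq_bigl do rewrite in_preimage.
under eq_bigr do rewrite fibre_kernelE.
rewrite sumEFin sum_fibre_frequency; rewrite -[LHS]/(@atoms _ T R s (A `*` B)).
rewrite (@atomsE _ T R s (A `*` B)).
by congr (_%:R%:E); apply: eq_count => p; exact: in_setX.
Qed.

Lemma atoms_preimage (f : R * R -> R) s s' A :
  perm_eq (map f s) (map f s') -> atoms s (f @^-1` A) = atoms s' (f @^-1` A) :> \bar R.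
Proof.
move=> /permP perm; rewrite !atomsE.
have count_preim t : count (mem (f @^-1` A)) t = count (mem A) (map f t).
  by rewrite count_map; apply: eq_count => p; exact: in_preimage.
by rewrite !count_preim perm.
Qed.

Lemma atoms_competitors s s' :
  perm_eq (map fst s) (map fst s') -> perm_eq (map snd s) (map snd s') ->
  (forall x, mean (fibre s x) = mean (fibre s' x)) ->
  competitors (atoms s) (atoms s').
Proof.
move=> fst_perm snd_perm fibre_mean.
split; first by move=> A _; exact: atoms_preimage.
split; first by move=> B _; exact: atoms_preimage.
exists (fibre_kernel s), (fibre_kernel s').
split; first exact: fibre_kernel_disintegration.
split; first exact: fibre_kernel_disintegration.
exists set0; split; first exact: measurable0.
split; first by rewrite /marg1 preimage_set0 measure0.
move=> x _; split; first exact: integrable_empirical_id.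
split; first exact: integrable_empirical_id.
by rewrite !integral_empirical_id fibre_mean.
Qed.

End fibres.

Lemma competitorblind_sum_atoms (R : realType) (A B : set R) (f : R * R -> R)
    (s s' : seq (R * R)) :
  measurable A -> measurable B -> competitorblind A B f ->
  {in s, forall p, (A `*` B) p} -> {in s', forall p, (A `*` B) p} ->
  perm_eq (map fst s) (map fst s') -> perm_eq (map snd s) (map snd s') ->
  (forall x, mean (fibre s x) = mean (fibre s' x)) ->
  \sum_(p <- s) f p = \sum_(p <- s') f p.
Proof.
move=> mA mB [mf blind] sAB s'AB fst_perm snd_perm fibre_mean.
have mAB : measurable (A `*` B) by exact: measurableX.
have conc t : {in t, forall p, (A `*` B) p} -> concentrated_on (atoms t) A B.
  by move=> tAB; apply: atoms_eq0 => p /tAB ABp; apply.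
have sum_in t : {in t, forall p, (A `*` B) p} ->
    \sum_(p <- t | p \in A `*` B) f p = \sum_(p <- t) f p.
  move=> tAB; rewrite big_seq_cond [RHS]big_seq; apply: eq_bigl => p.
  by case: (boolP (p \in t)) => // pt; rewrite mem_set //; exact: tAB.
have := blind _ _ (atoms_competitors fst_perm snd_perm fibre_mean) (conc _ sAB)
  (conc _ s'AB) (integrable_atoms s mAB mf) (integrable_atoms s' mAB mf).
by rewrite !integral_atoms // !sum_in // => -[].
Qed.

Lemma competitorblind_cross (R : realType) (A B : set R) (f : R * R -> R)
    (a b c e : R) :
  measurable A -> measurable B -> competitorblind A B f -> a != b ->
  A a -> A b -> B c -> B e -> B ((c + e) / 2) ->
  2 * f (a, (c + e) / 2) + f (b, c) + f (b, e) =
  f (a, c) + f (a, e) + 2 * f (b, (c + e) / 2).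
Proof.
move=> mA mB blindf ab Aa Ab Bc Be Bm; set m := (c + e) / 2.
have : \sum_(p <- [:: (a, m); (a, m); (b, c); (b, e)]) f p =
       \sum_(p <- [:: (a, c); (a, e); (b, m); (b, m)]) f p.
  apply: (competitorblind_sum_atoms mA mB blindf).
  - by move=> p; rewrite !inE => /or4P[] /eqP ->.
  - by move=> p; rewrite !inE => /or4P[] /eqP ->.
  - exact: perm_refl.
  - by change (perm_eq ([:: m; m] ++ [:: c; e]) ([:: c; e] ++ [:: m; m])); rewrite perm_catC.
  move=> x; rewrite /mean /fibre.
  have [->|xa] := eqVneq x a.
    by rewrite /= eqxx eq_sym (negbTE ab) /= !big_cons big_nil /m; lra.
  have [->|xb] := eqVneq x b.
    by rewrite /= eqxx (negbTE ab) /= !big_cons big_nil /m; lra.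
  by rewrite /= !(eq_sym a) !(eq_sym b) (negbTE xa) (negbTE xb).
rewrite !big_cons big_nil; lra.
Qed.

Section bump.
Context (R : realType).
Implicit Types c r x : R.

Definition bump c r x := Num.max 0 (r - `|x - c|).

Lemma bump_continuous c r : continuous (bump c r).
Proof.
move=> x; have -> : bump c r = (cst 0 : R -> R^o) \max (fun y => r - `|y - c|) by [].
apply: continuous_max; first exact: cst_continuous.
apply: cvgB; first exact: cvg_cst.
by apply: cvg_norm; apply: cvgB; [exact: cvg_id | exact: cvg_cst].
Qed.

Lemma bump_normr_le c r x : 0 <= r -> `|bump c r x| <= r.
Proof.
move=> r0; rewrite ger0_norm ?le_max ?lexx // ge_max r0 /=.
by rewrite lerBlDr lerDl.
Qed.

Lemma bump_center c r : 0 <= r -> bump c r c = r.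
Proof. by move=> r0; rewrite /bump subrr normr0 subr0 max_r. Qed.

Lemma bump_eq0 c r x : r <= `|x - c| -> bump c r x = 0.
Proof. by move=> rx; rewrite /bump max_l // subr_le0. Qed.

End bump.

Lemma notin_seq_separated (R : realFieldType) (c : R) (t : seq R) :
  {in t, forall x, x != c} -> exists2 r, 0 < r & {in t, forall x, r <= `|x - c|}.
Proof.
elim: t => [|y t IHt] yt_c; first by exists 1.
have [|r r_gt0 t_far] := IHt; first by move=> x xt; apply: yt_c; rewrite inE xt orbT.
have y_far : 0 < `|y - c| by rewrite normr_gt0 subr_eq0 yt_c ?mem_head.
exists (Num.min r `|y - c|); first by rewrite lt_min r_gt0.
move=> x; rewrite inE => /orP[/eqP->|xt]; first by rewrite ge_min lexx orbT.
by rewrite ge_min t_far.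
Qed.

Theorem lemma4p7 (R : realType) (I J : interval R) (Jt : set R)
  (t h : R -> R -> R)
  (hI : exists a b, a < b /\ a \in I /\ b \in I)
  (hJ : exists a b, a < b /\ a \in J /\ b \in J)
  (ht : forall x y, x \in I -> y \in J -> Jt (t x y))
  (hh : forall x y, x \in I -> y \in J -> 0 < h x y)
  (hblind : forall g : R -> R, continuous g ->
      (exists M : R, forall r, `|g r| <= M) ->
      competitorblind [set` I] [set` J]
        (fun z : R * R => g (t z.1 z.2) * h z.1 z.2)) :
  ~ (forall x1 y1 x2 y2, x1 \in I -> y1 \in J -> x2 \in I -> y2 \in J ->
       t x1 y1 = t x2 y2 -> x1 = x2 /\ y1 = y2).
Proof.
move=> t_inj.
have [a [b [ab [aI bI]]]] := hI; have [c [e [ce [cJ eJ]]]] := hJ.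
set m := (c + e) / 2.
have mJ : m \in J by apply: (interval_is_interval cJ eJ); rewrite /m; lra.
have t_ne x y : x \in I -> y \in J -> (x != a) || (y != m) -> t x y != t a m.
  move=> xI yJ; apply: contraTN => /eqP /(t_inj _ _ _ _ xI yJ aI mJ)[-> ->].
  by rewrite !eqxx.
have ba : b != a by rewrite gt_eqF.
have cm : c != m by rewrite lt_eqF // /m; lra.
have em : e != m by rewrite gt_eqF // /m; lra.
have [r r_gt0 t_far] : exists2 r, 0 < r &
    {in [:: t b c; t b e; t a c; t a e; t b m], forall z, r <= `|z - t a m|}.
  apply: notin_seq_separated => z; rewrite !inE.
  by move=> /orP[|/orP[|/orP[|/orP[]]]] /eqP ->; apply: t_ne; rewrite ?ba ?cm ?em ?orbT.
have := competitorblind_cross (measurable_itv I) (measurable_itv J)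
  (hblind _ (@bump_continuous _ (t a m) r)
     (ex_intro _ r (fun z => bump_normr_le _ _ (ltW r_gt0))))
  (negbT (lt_eqF ab)) aI bI cJ eJ mJ.
rewrite -/m /= bump_center ?(ltW r_gt0) // !bump_eq0;
  try by apply: t_far; rewrite !inE eqxx ?orbT.
have := mulr_gt0 r_gt0 (hh _ _ aI mJ); lra.
Qed.
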